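(* Let $G$ be a connected graph that admits a distinguishing edge coloring. Then $\theta'(G)=2$ if and only if $G\cong K_{1,2}$.
   Context: All graphs are finite and simple. An automorphism acts on edges by $\alpha(uv)=\alpha(u)\alpha(v)$. An edge coloring with $k$ colors is a surjective map $c:E(G)\to\{1,\dots,k\}$. It is distinguishing if only the identity automorphism preserves all edge colors. $\theta'(G)$ is the least integer $k$ such that every edge coloring of $G$ using exactly $k$ colors is distinguishing. *)

From mathcomp Require Import all_boot all_fingroup.
Set Implicit Arguments. Unset Strict Implicit. Unset Printing Implicit Defensive.

(* A finite simple graph: vertex type T : finType, adjacency e : rel T,
   assumed symmetric and irreflexive (as hypotheses of the theorem). *)

Definition edges (T : finType) (e : rel T) : {set {set T}} :=
  [set f : {set T} | [exists x, exists y, e x y && (f == [set x; y])]].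

Definition is_aut (T : finType) (e : rel T) (s : {perm T}) : Prop :=
  forall x y, e (s x) (s y) = e x y.

Definition connected_graph (T : finType) (e : rel T) : Prop :=
  (exists x : T, True) /\ forall x y : T, connect e x y.

Definition uses_exactly (T : finType) (e : rel T) (k : nat)
  (c : {set T} -> 'I_k) : Prop :=
  forall i : 'I_k, exists2 f, f \in edges e & c f = i.

Definition distinguishing (T : finType) (e : rel T) (k : nat)
  (c : {set T} -> 'I_k) : Prop :=
  forall s : {perm T}, is_aut e s ->
    (forall f, f \in edges e -> c (s @: f) = c f) -> s = 1%g.

Definition has_dist_edge_coloring (T : finType) (e : rel T) : Prop :=
  exists k (c : {set T} -> 'I_k), uses_exactly e c /\ distinguishing e c.

Definition all_dist (T : finType) (e : rel T) (k : nat) : Prop :=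
  forall c : {set T} -> 'I_k, uses_exactly e c -> distinguishing e c.

Definition theta'_eq (T : finType) (e : rel T) (k : nat) : Prop :=
  0 < k /\ all_dist e k /\ forall j, 0 < j < k -> ~ all_dist e j.

Definition K12 : rel 'I_3 := fun i j => (i != j) && ((val i == 0) || (val j == 0)).

Definition isomorphic_K12 (T : finType) (e : rel T) : Prop :=
  exists f : T -> 'I_3, bijective f /\ forall x y, e x y = K12 (f x) (f y).

From mathcomp Require Import all_boot all_fingroup.

Set Implicit Arguments. Unset Strict Implicit. Unset Printing Implicit Defensive.

(* Since some colouring with one colour is not distinguishing, G has a
   nontrivial automorphism.  If every 2-colouring using both colours is
   distinguishing, a nontrivial automorphism t leaves invariant no edge set
   other than the empty one and E(G): colouring such a set differently from
   its complement gives a colouring preserved by t.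
   If some such t fixes a vertex v, the edges through v form a t-invariant
   set, so G is a star centred at v; a transposition of two leaves fixes any
   third edge, so G = K_{1,2}.
   Otherwise all nontrivial automorphisms are fixed-point free.  For a
   nontrivial s, E(G) is a single <s>-orbit of an edge ab.  If b is in the
   <s>-orbit of a, then <s> acts regularly on the vertices and h a |-> h^-1 a
   is an automorphism fixing a, hence the identity, so s is an involution;
   if not, a and b have no other neighbours.  Either way G is the single edge
   ab, whose automorphisms fix every edge, so the distinguishing colouring
   forces s = 1. *)

Local Open Scope group_scope.

Section GraphAutomorphisms.
Variables (T : finType) (e : rel T).

(** * Automorphisms and edge colourings *)

Definition graph_aut : {set {perm T}} :=
  [set s : {perm T} | [forall x, forall y, e (s x) (s y) == e x y]].

Lemma graph_autP s : reflect (is_aut e s) (s \in graph_aut).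
Proof.
rewrite inE; apply: (iffP forallP) => [Hs x y | Hs x].
  exact/eqP/(forallP (Hs x) y).
by apply/forallP => y; rewrite Hs.
Qed.

Lemma graph_aut_group_set : group_set graph_aut.
Proof.
apply/group_setP; split=> [|s t /graph_autP Hs /graph_autP Ht].
  by apply/graph_autP => x y; rewrite !perm1.
by apply/graph_autP => x y; rewrite !permM Ht Hs.
Qed.

Canonical graph_aut_group := Group graph_aut_group_set.

Lemma imset_perm_set2 (s : {perm T}) x y : s @: [set x; y] = [set s x; s y].
Proof. by rewrite imsetU1 imset_set1. Qed.

Lemma edgesP f : reflect (exists x y, e x y /\ f = [set x; y]) (f \in edges e).
Proof.
rewrite inE; apply: (iffP existsP) => [[x /existsP[y /andP[exy /eqP->]]]|[x [y [exy ->]]]].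
  by exists x, y.
by exists x; apply/existsP; exists y; rewrite exy eqxx.
Qed.

Lemma edges_set2 x y : e x y -> [set x; y] \in edges e.
Proof. by move=> exy; apply/edgesP; exists x, y. Qed.

Lemma graph_aut_edges s f : s \in graph_aut -> f \in edges e -> s @: f \in edges e.
Proof.
move=> /graph_autP Hs /edgesP[x [y [exy ->]]].
by rewrite imset_perm_set2; apply: edges_set2; rewrite Hs.
Qed.

Lemma dist_coloring_fix_edges s :
  has_dist_edge_coloring e -> s \in graph_aut ->
  {in edges e, forall f : {set T}, s @: f = f} -> s = 1.
Proof.
move=> [k [c [_ dist_c]]] /graph_autP Hs fix_s.
by apply: dist_c => // f Ef; rewrite fix_s.
Qed.

Lemma not_all_dist_nontrivial_aut k :
  ~ all_dist e k -> exists2 s, s \in graph_aut & s != 1.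
Proof.
move=> not_dist; case: (boolP [exists s in graph_aut, s != 1]).
  by case/exists_inP=> s; exists s.
move=> /exists_inPn triv; case: not_dist => c _ s /graph_autP Hs _.
by apply/eqP; rewrite -[_ == _]negbK triv.
Qed.

Lemma all_dist2_invariant_edges t (S : {set {set T}}) :
  all_dist e 2 -> t \in graph_aut -> t != 1 ->
  {in edges e, forall f : {set T}, (t @: f \in S) = (f \in S)} ->
  {in edges e &, forall f1 f2 : {set T}, (f1 \in S) = (f2 \in S)}.
Proof.
move=> dist2 /graph_autP Ht nt invS f1 f2 E1 E2.
(* Colour the edges by membership in S; t preserves this colouring. *)
apply: contraTeq nt => neqS; apply/negPn/eqP.
pose c f : 'I_2 := inord (f \in S).
apply: (dist2 c) Ht _ => [i|f Ef]; last by rewrite /c invS.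
have [f Ef Sf] : exists2 f, f \in edges e & (f \in S) = (i == 1%N :> nat).
  move: neqS; case Sf1: (f1 \in S); case Sf2: (f2 \in S) => // _;
    case: i => [[|[|//]]] ? /=; first [by exists f1 | by exists f2].
exists f => //; apply: ord_inj; rewrite /c Sf inordK ?ltnS ?leq_b1 //.
by case: (nat_of_ord i) (ltn_ord i) => [|[|]].
Qed.

Lemma all_dist2_edge_orbit s f0 :
  all_dist e 2 -> s \in graph_aut -> s != 1 -> f0 \in edges e ->
  {in edges e, forall f, f \in orbit 'P^* <[s]> f0}.
Proof.
move=> dist2 aut_s ns E0 f Ef.
have inv_orbit : {in edges e, forall g : {set T},
    (s @: g \in orbit 'P^* <[s]> f0) = (g \in orbit 'P^* <[s]> f0)}.
  move=> g _; change (s @: g) with ('P^*%act g s).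
  by rewrite orbit_sym orbit_act ?cycle_id // orbit_sym.
by rewrite -(all_dist2_invariant_edges dist2 aut_s ns inv_orbit E0 Ef) orbit_refl.
Qed.

Lemma perm_set2_fix (s : {perm T}) x y :
  s @: [set x; y] = [set x; y] -> s x = x -> s y = y.
Proof.
move=> sxy sx; have := imset_f s (set22 x y); rewrite sxy => /set2P[syx|] //.
by apply: (@perm_inj _ s); rewrite syx sx.
Qed.

Lemma uniq3 (x y z : T) : uniq [:: x; y; z] = [&& x != y, x != z & y != z].
Proof. by rewrite /= !inE negb_or andbT andbA. Qed.

Lemma nontrivial_perm_moves (s : {perm T}) : s != 1 -> exists x, s x != x.
Proof.
move=> ns; apply/existsP; rewrite -negb_forall; apply: contra ns => /forallP fix_s.
by apply/eqP/permP => x; rewrite perm1; apply/eqP.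
Qed.

Hypothesis e_sym : symmetric e.
Hypothesis e_irr : irreflexive e.

Lemma connected_neighbor x y : connected_graph e -> x != y -> exists z, e x z.
Proof.
move=> [_ conn] nxy; have /connectP[[|z p] /= ep lastp] := conn x y.
  by rewrite lastp eqxx in nxy.
by exists z; case/andP: ep.
Qed.

Lemma connected_closed (A : {pred T}) a :
  connected_graph e -> (forall x y, e x y -> x \in A -> y \in A) ->
  a \in A -> forall x, x \in A.
Proof.
move=> [_ conn] clA Aa x.
have clA' : closed e A by move=> y z eyz; apply/idP/idP; apply: clA; rewrite // e_sym.
by rewrite -(closed_connect clA' (conn a x)).
Qed.

(** * Stars *)

Definition star_at v := forall x y, e x y = (x != y) && ((x == v) || (y == v)).

Lemma star_atP v :
  connected_graph e -> (forall x y, e x y -> (x == v) || (y == v)) -> star_at v.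
Proof.
move=> conn edge_v.
have ev x : x != v -> e v x.
  move=> nxv; have [z exz] := connected_neighbor conn nxv.
  by have /orP[/eqP xv|/eqP <-] := edge_v _ _ exz; [rewrite xv eqxx in nxv | rewrite e_sym].
move=> x y; case: (eqVneq x y) => [<-|nxy]; first by rewrite e_irr.
apply/idP/orP => [/edge_v/orP //|[/eqP xv|/eqP yv]].
  by rewrite xv ev // -xv eq_sym.
by rewrite e_sym yv ev // -yv.
Qed.

Lemma star_aut v (s : {perm T}) : star_at v -> s v = v -> s \in graph_aut.
Proof.
move=> star sv; apply/graph_autP => x y.
by rewrite !star (inj_eq perm_inj) -{1 2}sv !(inj_eq perm_inj).
Qed.

Lemma edges_through_fixpoint t v :
  connected_graph e -> all_dist e 2 -> t \in graph_aut -> t != 1 -> t v = v ->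
  forall x y, e x y -> (x == v) || (y == v).
Proof.
move=> conn dist2 aut_t nt tv x y exy.
have [w tw] := nontrivial_perm_moves nt.
have nvw : v != w by apply: contraNneq tw => <-; rewrite tv.
have [u evu] := connected_neighbor conn nvw.
pose S := [set f : {set T} | v \in f].
have inv_v : {in edges e, forall f : {set T}, (t @: f \in S) = (f \in S)}.
  by move=> f _; rewrite !inE -{1}tv mem_imset //; apply: perm_inj.
have := all_dist2_invariant_edges dist2 aut_t nt inv_v (edges_set2 evu) (edges_set2 exy).
by rewrite !inE eqxx => /esym/orP[]/eqP->; rewrite eqxx ?orbT.
Qed.

Lemma all_dist2_star_vertices v u w :
  all_dist e 2 -> star_at v -> uniq [:: v; u; w] -> forall x, x \in [:: v; u; w].
Proof.
rewrite uniq3 => dist2 star /and3P[nvu nvw nuw] l.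
apply/idPn; rewrite !inE => /norP[nlv /norP[nlu nlw]].
pose t := tperm u w.
have tv : t v = v by rewrite tpermD // eq_sym.
have aut_t : t \in graph_aut := star_aut star tv.
have nt : t != 1 by apply: contraNneq nuw => t1; rewrite -(tpermL u w) -/t t1 perm1.
pose S := [set [set v; l]].
have inv_l : {in edges e, forall f : {set T}, (t @: f \in S) = (f \in S)}.
  have tvl : t @: [set v; l] = [set v; l] by rewrite imset_perm_set2 tv tpermD // eq_sym.
  by move=> f _; rewrite !inE -{1}tvl (inj_eq (imset_inj perm_inj)).
have evl : e v l by rewrite star eq_sym nlv eqxx.
have evu : e v u by rewrite star nvu eqxx.
have := all_dist2_invariant_edges dist2 aut_t nt inv_l (edges_set2 evl) (edges_set2 evu).
rewrite !inE eqxx => /esym/eqP/setP/(_ u); rewrite !inE eqxx orbT.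
by rewrite !(eq_sym u) (negbTE nvu) (negbTE nlu).
Qed.

(* The graph is K_{1,2} with centre v and leaves u, w. *)
Definition cherry v u w := [/\ uniq [:: v; u; w], forall x, x \in [:: v; u; w] & star_at v].

Lemma fixpoint_aut_cherry t v :
  connected_graph e -> all_dist e 2 -> t \in graph_aut -> t != 1 -> t v = v ->
  exists u w, cherry v u w.
Proof.
move=> conn dist2 aut_t nt tv.
have star : star_at v := star_atP conn (edges_through_fixpoint conn dist2 aut_t nt tv).
have [u tu] := nontrivial_perm_moves nt.
have uniq_vutu : uniq [:: v; u; t u].
  rewrite uniq3 (eq_sym u) tu andbT.
  apply/andP; split; first by apply: contraNneq tu => <-; rewrite tv.
  by apply: contraNneq tu => vtu; rewrite -vtu; apply/eqP/(@perm_inj _ t); rewrite tv.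
by exists u, (t u); split => //; apply: all_dist2_star_vertices.
Qed.

Lemma isomorphic_K12P : isomorphic_K12 e <-> exists v u w, cherry v u w.
Proof.
split=> [[f [[g fK gK] ef]] | [v [u [w [uniq_vuw all_vuw star]]]]].
  exists (g ord0), (g (inord 1)), (g (inord 2)); split.
  - by rewrite /= !inE !(inj_eq (can_inj gK)) -!val_eqE /= !inordK.
  - move=> x; rewrite -(fK x) !inE !(inj_eq (can_inj gK)).
    by case: (f x) => [[|[|[|]]]] //= ?; rewrite -!val_eqE /= ?inordK ?eqxx ?orbT.
  move=> x y; rewrite ef /K12 (inj_eq (can_inj fK)) -[0%N]/(val (@ord0 2)) !val_eqE.
  by rewrite !(can2_eq fK gK).
pose s := [:: v; u; w].
have index_lt x : index x s < 3 by rewrite -[3]/(size s) index_mem.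
pose f x : 'I_3 := inord (index x s).
have fK : cancel f (fun i : 'I_3 => nth v s i) by move=> x; rewrite inordK ?nth_index.
exists f; split.
  exists (fun i : 'I_3 => nth v s i) => // i.
  by apply: ord_inj; rewrite inordK index_uniq ?ltn_ord.
have val_f0 x : (val (f x) == 0%N) = (x == v).
  by rewrite /= inordK // /= (eq_sym v); case: (x == v).
by move=> x y; rewrite star /K12 (inj_eq (can_inj fK)) !val_f0.
Qed.

Lemma cherry_edges v u w f :
  cherry v u w -> f \in edges e -> f = [set v; u] \/ f = [set v; w].
Proof.
move=> [_ all_vuw star] /edgesP[x [y [exy ->]]].
wlog xv : x y exy / x = v.
  move=> wl; have := exy; rewrite star => /andP[_ /orP[/eqP xv|/eqP yv]].
    exact: wl.
  by rewrite setUC; apply: wl; rewrite // e_sym.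
move: exy; rewrite xv; have := all_vuw y; rewrite !inE.
by case/or3P=> /eqP->; rewrite ?e_irr; [| left | right].
Qed.

Lemma cherry_all_dist2 v u w : cherry v u w -> all_dist e 2.
Proof.
move=> cvuw; have [/[!uniq3]/and3P[nvu nvw nuw] all_vuw star] := cvuw.
move=> c c_onto s /graph_autP aut_s c_s.
have E1 : [set v; u] \in edges e by apply: edges_set2; rewrite star nvu eqxx.
have E2 : [set v; w] \in edges e by apply: edges_set2; rewrite star nvw eqxx.
have c12 : c [set v; u] != c [set v; w].
  apply/eqP => c12.
  have [f0 /(cherry_edges cvuw) f0E c0] := c_onto ord0.
  have [f1 /(cherry_edges cvuw) f1E c1] := c_onto ord_max.
  have : c f0 = c f1 by case: f0E f1E => -> [] ->.
  by rewrite c0 c1 => /(congr1 val).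
have fix_edges f : f \in edges e -> s @: f = f.
  move=> Ef; have /(cherry_edges cvuw) sfE := graph_aut_edges aut_s Ef.
  have := c_s _ Ef; case: (cherry_edges cvuw Ef) sfE => -> [] -> // c_eq;
    by rewrite c_eq eqxx in c12.
have sv : s v = v.
  have := imset_f s (set21 v u); rewrite fix_edges // => /set2P[] // svu.
  have := imset_f s (set21 v w); rewrite fix_edges // svu => /set2P[uv|uw].
    by rewrite uv eqxx in nvu.
  by rewrite uw eqxx in nuw.
apply/permP => x; rewrite perm1; have := all_vuw x.
rewrite !inE => /or3P[/eqP->|/eqP->|/eqP->] //.
  exact: perm_set2_fix (fix_edges _ E1) sv.
exact: perm_set2_fix (fix_edges _ E2) sv.
Qed.

Lemma cherry_not_all_dist1 v u w : cherry v u w -> ~ all_dist e 1.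
Proof.
move=> [/[!uniq3]/and3P[nvu nvw nuw] _ star] dist1.
pose t := tperm u w.
have tv : t v = v by rewrite tpermD // eq_sym.
have nt : t != 1 by apply: contraNneq nuw => t1; rewrite -(tpermL u w) -/t t1 perm1.
have onto : uses_exactly e (fun _ => ord0 : 'I_1).
  by move=> i; exists [set v; u]; rewrite ?ord1 //; apply: edges_set2; rewrite star nvu eqxx.
have /graph_autP aut_t := star_aut star tv.
by move/eqP: nt; apply; apply: (dist1 _ onto t aut_t).
Qed.

Lemma cherry_theta'2 v u w : cherry v u w -> theta'_eq e 2.
Proof.
move=> cvuw; split; [by [] | split; first exact: cherry_all_dist2 cvuw].
by case=> [|[|]] // _; apply: cherry_not_all_dist1 cvuw.
Qed.

(** * Fixed-point-free automorphisms *)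

Definition edge_transitive_from (H : {set {perm T}}) a b :=
  forall x y, e x y -> exists2 h, h \in H & [set x; y] = [set h a; h b].

Section Inversion.
Variables (H : {group {perm T}}) (a : T).
Hypotheses (autH : H \subset graph_aut) (abelH : abelian H).
Hypothesis regH : {in H, forall h : {perm T}, h a = a -> h = 1}.
Hypothesis transH : forall x, x \in orbit 'P H a.

Definition lift_to x := odflt 1 [pick h in H | h a == x].

Lemma lift_toP x : lift_to x \in H /\ lift_to x a = x.
Proof.
rewrite /lift_to; case: pickP => [h /andP[Hh /eqP hx] | no_h] //=.
by have /orbitP[h Hh hax] := transH x; have := no_h h; rewrite Hh -apermE hax eqxx.
Qed.

Lemma lift_to_act h : h \in H -> lift_to (h a) = h.
Proof.
move=> Hh; have [Hl la] := lift_toP (h a).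
apply/eqP; rewrite eq_mulgV1; apply/eqP/regH; first by rewrite groupM ?groupV.
by rewrite permM la permK.
Qed.

Definition inversion_fun x := (lift_to x)^-1 a.

Lemma inversion_fun_inj : injective inversion_fun.
Proof.
move=> p q; rewrite /inversion_fun => Epq.
have [Hp pa] := lift_toP p; have [Hq qa] := lift_toP q.
have : (lift_to p)^-1 = (lift_to q)^-1.
  by rewrite -[LHS]lift_to_act ?groupV // Epq lift_to_act ?groupV.
by move/invg_inj => Elift; rewrite -pa -qa Elift.
Qed.

Definition inversion := perm inversion_fun_inj.

Lemma inversionE h : h \in H -> inversion (h a) = h^-1 a.
Proof. by move=> Hh; rewrite permE /inversion_fun lift_to_act. Qed.

Lemma inversion_aut : inversion \in graph_aut.
Proof.
apply/graph_autP => p q; have [Hp pa] := lift_toP p; have [Hq qa] := lift_toP q.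
have /graph_autP aut_pq : lift_to p * lift_to q \in graph_aut.
  by apply: (subsetP autH); rewrite groupM.
rewrite !permE /inversion_fun -aut_pq {1}permM permKV qa.
by rewrite (centsP abelH _ Hp _ Hq) permM permKV pa e_sym.
Qed.

Lemma inversion_fixed : inversion a = a.
Proof. by rewrite -{1}[a]perm1 inversionE ?group1 // invg1 perm1. Qed.

End Inversion.

Definition semiregular_auts := forall (t : {perm T}) x, t \in graph_aut -> t x = x -> t = 1.

Lemma separated_edge_transitive_two_vertices (H : {group {perm T}}) a b :
  connected_graph e -> {in H, forall (h : {perm T}) x, h x = x -> h = 1} ->
  edge_transitive_from H a b -> b \notin orbit 'P H a -> forall x, x \in [set a; b].
Proof.
move=> conn reg trH b_out.
apply: (connected_closed conn _ (set21 a b)) => x y exy xab.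
have [h Hh Exy] := trH x y exy.
have h1 : h = 1.
  have : x \in [set h a; h b] by rewrite -Exy set21.
  case/set2P: xab => -> /set2P[] E; first exact: reg h Hh _ (esym E).
  - by case/negP: b_out; apply/orbitP; exists h^-1; rewrite ?groupV //= E apermE permK.
  - by case/negP: b_out; apply/orbitP; exists h.
  exact: reg h Hh _ (esym E).
by have := set22 x y; rewrite Exy h1 !perm1.
Qed.

Lemma cyclic_edge_transitive_two_vertices s a b :
  connected_graph e -> semiregular_auts -> s \in graph_aut -> e a b ->
  edge_transitive_from <[s]> a b -> b \in orbit 'P <[s]> a -> forall x, x \in [set a; b].
Proof.
move=> conn semireg aut_s eab trH b_in.
have autH : <[s]> \subset graph_aut by rewrite cycle_subG.
have reg h x : h \in <[s]> -> h x = x -> h = 1 by move=> Hh; apply/semireg/(subsetP autH).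
have transH x : x \in orbit 'P <[s]> a.
  apply: (connected_closed conn _ (orbit_refl _ _ a)) => {}x y exy x_in.
  have [h Hh Exy] := trH x y exy.
  have : y \in [set h a; h b] by rewrite -Exy set22.
  case/set2P=> ->; first exact: mem_orbit.
  by have /orbit_eqP <- := b_in; apply: mem_orbit.
have regH : {in <[s]>, forall h : {perm T}, h a = a -> h = 1} by move=> h Hh; apply: reg.
have inv1 : inversion regH transH = 1.
  have aut_inv := inversion_aut autH (cycle_abelian s) regH transH.
  exact: semireg aut_inv (inversion_fixed regH transH).
have ss : s * s = 1.
  apply: (reg _ a); first by rewrite groupM ?cycle_id.
  have := inversionE regH transH (cycle_id s); rewrite inv1 perm1 => sa.
  by rewrite permM sa permKV.
have cyc2 h : h \in <[s]> -> h = 1 \/ h = s.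
  case/cycleP=> i ->; elim: i => [|i [IH|IH]]; rewrite ?expg0 ?expgS ?IH ?mulg1; tauto.
have bsa : b = s a.
  have /orbitP[h Hh] := b_in; rewrite /= apermE.
  by case: (cyc2 h Hh) => -> // ab; rewrite -ab perm1 e_irr in eab.
move=> x; have /orbitP[h Hh <-] := transH x.
by rewrite /= apermE bsa; case: (cyc2 h Hh) => ->; rewrite ?perm1 !inE eqxx ?orbT.
Qed.

Lemma edges_two_vertices a b f :
  (forall x, x \in [set a; b]) -> f \in edges e -> f = [set a; b].
Proof.
move=> ab /edgesP[x [y [exy ->]]].
case/set2P: (ab x) (ab y) exy => -> /set2P[]->; rewrite ?e_irr // => _.
exact: setUC.
Qed.

Lemma semiregular_auts_trivial :
  connected_graph e -> all_dist e 2 -> has_dist_edge_coloring e -> semiregular_auts ->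
  forall s, s \in graph_aut -> s = 1.
Proof.
move=> conn dist2 hd semireg s aut_s; apply/eqP; apply: contraT => ns.
have [a sa] := nontrivial_perm_moves ns; rewrite eq_sym in sa.
have [b eab] := connected_neighbor conn sa.
have trH : edge_transitive_from <[s]> a b.
  move=> x y /edges_set2 Exy.
  have /orbitP[h Hh hE] := all_dist2_edge_orbit dist2 aut_s ns (edges_set2 eab) Exy.
  by exists h; rewrite // -hE /= -imset_perm_set2.
have ab x : x \in [set a; b].
  have [b_in | b_out] := boolP (b \in orbit 'P <[s]> a).
    exact: cyclic_edge_transitive_two_vertices b_in x.
  apply: separated_edge_transitive_two_vertices b_out x => // h Hh x.
  by apply/semireg/(subsetP _ h Hh); rewrite cycle_subG.
case/eqP: ns; apply: (dist_coloring_fix_edges hd aut_s) => f Ef.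
by rewrite [RHS](edges_two_vertices ab Ef) (edges_two_vertices ab (graph_aut_edges aut_s Ef)).
Qed.

Lemma theta'2_cherry :
  connected_graph e -> has_dist_edge_coloring e -> theta'_eq e 2 -> exists v u w, cherry v u w.
Proof.
move=> conn hd [_ [dist2 not_dist1]].
have [s aut_s ns] := not_all_dist_nontrivial_aut (not_dist1 1%N isT).
have [/exists_inP[t aut_t /existsP[v /andP[nt /eqP tv]]] | no_fix] :=
  boolP [exists t in graph_aut, exists v, (t != 1) && (t v == v)].
  by exists v; apply: fixpoint_aut_cherry aut_t nt tv.
case/eqP: ns; apply: semiregular_auts_trivial => // t x aut_t tx.
apply/eqP; apply: contraNT no_fix => nt.
by apply/exists_inP; exists t => //; apply/existsP; exists x; rewrite nt tx eqxx.
Qed.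

End GraphAutomorphisms.

Theorem mainTheorem3 (T : finType) (e : rel T)
  (e_sym : symmetric e) (e_irr : irreflexive e) :
  connected_graph e -> has_dist_edge_coloring e ->
  (theta'_eq e 2 <-> isomorphic_K12 e).
Proof.
move=> conn hd; split=> [theta2 | /isomorphic_K12P[v [u [w cherry_vuw]]]].
  by apply/isomorphic_K12P; apply: theta'2_cherry.
exact: cherry_theta'2 cherry_vuw.
Qed.
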